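(* The composition of weakly admissible correspondences in $\mathrm{DGRings}^{0,-1}$ is weakly admissible. The composition of anamorphisms is an anamorphism.
   Context: Rings are commutative and unital. $\mathrm{DGRings}^{0,-1}$ is the category of commutative DG rings $R$ with $R^i=0$ for $i\ne 0,-1$. Equivalently, such $R$ is a ring $R^0$, an $R^0$-module $R^{-1}$ and an $R^0$-linear $d:R^{-1}\to R^0$ with $d(x)y=d(y)x$. Quasi-isomorphisms are morphisms inducing isomorphisms on $\ker d$ and $\operatorname{coker} d$. A correspondence from $R_1$ to $R_2$ is a diagram $R_1\xleftarrow{f}R_{12}\xrightarrow{g}R_2$ in $\mathrm{DGRings}^{0,-1}$. The composition of correspondences $R_1\leftarrow R_{12}\to R_2$ and $R_2\leftarrow R_{23}\to R_3$ is $R_1\leftarrow R_{12}\times_{R_2}R_{23}\to R_3$, using the fiber product in $\mathrm{DGRings}^{0,-1}$. A correspondence is weakly admissible if $f$ is a quasi-isomorphism and $R_{12}^{-1}\to R_1^{-1}\times R_2^{-1}$ is surjective. It is an anamorphism if $f$ is a surjective quasi-isomorphism. *)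

From HB Require Import structures.
From mathcomp Require Import all_boot all_algebra.

Set Implicit Arguments.
Unset Strict Implicit.
Unset Printing Implicit Defensive.

Import GRing.Theory.
Local Open Scope ring_scope.

(* An object of DGRings^{0,-1}: ring R^0, R^0-module R^{-1}, R^0-linear
   d : R^{-1} -> R^0 with d(x) y = d(y) x. *)
Record dgring := DGRing {
  dg0 : comPzRingType;
  dg1 : lmodType dg0;
  dgd : dg1 -> dg0;
  dgd_lin : forall (r : dg0) (x y : dg1), dgd (r *: x + y) = r * dgd x + dgd y;
  dgd_sym : forall x y : dg1, dgd x *: y = dgd y *: x }.

Record dgmor (R S : dgring) := DGMor {
  mor0 : dg0 R -> dg0 S;
  mor1 : dg1 R -> dg1 S;
  mor0_add : forall x y, mor0 (x + y) = mor0 x + mor0 y;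
  mor0_mul : forall x y, mor0 (x * y) = mor0 x * mor0 y;
  mor0_1 : mor0 1 = 1;
  mor1_lin : forall r x y, mor1 (r *: x + y) = mor0 r *: mor1 x + mor1 y;
  mor_d : forall x, mor0 (dgd x) = dgd (mor1 x) }.

Section MorTheory.
Variables (R S : dgring) (f : dgmor R S).

Lemma mor0_0 : mor0 f 0 = 0.
Proof. by move: (mor0_add f 0 0); rewrite addr0 => /esym/eqP; rewrite -subr_eq0 addrK => /eqP. Qed.
Lemma mor0_N x : mor0 f (- x) = - mor0 f x.
Proof. by apply/eqP; rewrite -addr_eq0 -mor0_add addNr mor0_0. Qed.
Lemma mor0_B x y : mor0 f (x - y) = mor0 f x - mor0 f y.
Proof. by rewrite mor0_add mor0_N. Qed.
Lemma mor1_add x y : mor1 f (x + y) = mor1 f x + mor1 f y.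
Proof. by rewrite -[x]scale1r mor1_lin mor0_1 !scale1r. Qed.
Lemma mor1_0 : mor1 f 0 = 0.
Proof. by move: (mor1_add 0 0); rewrite addr0 => /esym/eqP; rewrite -subr_eq0 addrK => /eqP. Qed.
Lemma mor1_Z r x : mor1 f (r *: x) = mor0 f r *: mor1 f x.
Proof. by rewrite -[r *: x]addr0 mor1_lin mor1_0 addr0. Qed.
Lemma mor1_N x : mor1 f (- x) = - mor1 f x.
Proof. by apply/eqP; rewrite -addr_eq0 -mor1_add addNr mor1_0. Qed.
Lemma mor1_B x y : mor1 f (x - y) = mor1 f x - mor1 f y.
Proof. by rewrite mor1_add mor1_N. Qed.
End MorTheory.

Section Comp.
Variables (R S T : dgring) (g : dgmor S T) (f : dgmor R S).
Definition dgcomp : dgmor R T.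
Proof.
refine (@DGMor R T (mor0 g \o mor0 f) (mor1 g \o mor1 f) _ _ _ _ _) => /=.
- by move=> x y; rewrite !mor0_add.
- by move=> x y; rewrite !mor0_mul.
- by rewrite !mor0_1.
- by move=> r x y; rewrite !mor1_lin.
- by move=> x; rewrite !mor_d.
Defined.
End Comp.

Section FiberProduct.
Variables (A B C : dgring) (f : dgmor A C) (g : dgmor B C).

Definition fp0_pred : {pred (dg0 A * dg0 B)%type} :=
  fun p => mor0 f p.1 == mor0 g p.2.

Lemma fp0_closed : subring_closed fp0_pred.
Proof.
split; rewrite /fp0_pred ?unfold_in /=.
- by rewrite !mor0_1.
- move=> x y; rewrite !unfold_in /= => /eqP hx /eqP hy; by rewrite !mor0_B hx hy.
- move=> x y; rewrite !unfold_in /= => /eqP hx /eqP hy; by rewrite !mor0_mul hx hy.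
Qed.

HB.instance Definition _ := GRing.isSubringClosed.Build _ fp0_pred fp0_closed.

Record fp0 := FP0 { fp0v : (dg0 A * dg0 B)%type; fp0P : fp0v \in fp0_pred }.
HB.instance Definition _ := [isSub for fp0v].
HB.instance Definition _ := [Choice of fp0 by <:].
HB.instance Definition _ := GRing.SubChoice_isSubComPzRing.Build _ _ fp0 fp0_closed.

Definition fp1_pred : {pred (dg1 A * dg1 B)%type} :=
  fun p => mor1 f p.1 == mor1 g p.2.

Lemma fp1_closed : zmod_closed fp1_pred.
Proof.
split; rewrite /fp1_pred ?unfold_in /=.
- by rewrite !mor1_0.
- move=> x y; rewrite !unfold_in /= => /eqP hx /eqP hy; by rewrite !mor1_B hx hy.
Qed.

HB.instance Definition _ := GRing.isZmodClosed.Build _ fp1_pred fp1_closed.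

Record fp1 := FP1 { fp1v : (dg1 A * dg1 B)%type; fp1P : fp1v \in fp1_pred }.
HB.instance Definition _ := [isSub for fp1v].
HB.instance Definition _ := [Choice of fp1 by <:].
HB.instance Definition _ := GRing.SubChoice_isSubZmodule.Build _ _ fp1 fp1_closed.

Lemma fp_scale_proof (r : fp0) (x : fp1) :
  ((fp0v r).1 *: (fp1v x).1, (fp0v r).2 *: (fp1v x).2) \in fp1_pred.
Proof.
case: r => [[r1 r2] /= /eqP hr]; case: x => [[x1 x2] /= /eqP hx].
by rewrite /fp1_pred unfold_in /= !mor1_Z hr hx.
Qed.

Definition fp_scale (r : fp0) (x : fp1) : fp1 := FP1 (fp_scale_proof r x).

Lemma fp_scalerA a b v : fp_scale a (fp_scale b v) = fp_scale (a * b) v.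
Proof. by apply: val_inj; rewrite /= !scalerA. Qed.
Lemma fp_scale1r : left_id 1 fp_scale.
Proof. by move=> v; apply: val_inj; case: v => [[x1 x2] ?]; rewrite /= !scale1r. Qed.
Lemma fp_scalerDr : right_distributive fp_scale +%R.
Proof. by move=> a u v; apply: val_inj; rewrite /= !scalerDr. Qed.
Lemma fp_scalerDl v : {morph fp_scale^~ v : a b / a + b}.
Proof. by move=> a b; apply: val_inj; rewrite /= !scalerDl. Qed.

HB.instance Definition _ := GRing.Zmodule_isLmodule.Build fp0 fp1
  fp_scalerA fp_scale1r fp_scalerDr fp_scalerDl.

Lemma fpd_proof (x : fp1) : (dgd (fp1v x).1, dgd (fp1v x).2) \in fp0_pred.
Proof.
case: x => [[x1 x2] /= /eqP hx].
by rewrite /fp0_pred unfold_in /= !mor_d hx.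
Qed.

Definition fpd (x : fp1) : fp0 := FP0 (fpd_proof x).

Lemma fpd_lin (r : fp0) (x y : fp1) : fpd (r *: x + y) = r * fpd x + fpd y.
Proof. by apply: val_inj; rewrite /= !dgd_lin. Qed.

Lemma fpd_sym (x y : fp1) : fpd x *: y = fpd y *: x.
Proof. by apply: val_inj; rewrite /= [dgd _ *: _]dgd_sym [X in (_, X)]dgd_sym. Qed.

Definition fiber_product : dgring := @DGRing fp0 fp1 fpd fpd_lin fpd_sym.

Definition fp_pr1 : dgmor fiber_product A.
Proof.
refine (@DGMor fiber_product A (fun p : fp0 => (fp0v p).1)
                                (fun x : fp1 => (fp1v x).1) _ _ _ _ _) => //.
Defined.

Definition fp_pr2 : dgmor fiber_product B.
Proof.
refine (@DGMor fiber_product B (fun p : fp0 => (fp0v p).2)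
                                (fun x : fp1 => (fp1v x).2) _ _ _ _ _) => //.
Defined.

End FiberProduct.

Arguments fp_pr1 {A B C f g}.
Arguments fp_pr2 {A B C f g}.

Section MorProps.
Variables (R S : dgring) (f : dgmor R S).

(* f is a quasi-isomorphism: it induces isomorphisms
   H^{-1} = ker d  and  H^0 = coker d  (the induced maps being bijective). *)
Definition quasi_iso : Prop :=
  [/\
      (forall x x' : dg1 R, dgd x = 0 -> dgd x' = 0 ->
         mor1 f x = mor1 f x' -> x = x'),
      (forall y : dg1 S, dgd y = 0 ->
         exists x : dg1 R, dgd x = 0 /\ mor1 f x = y),
      (* injective on coker d = R^0 / d(R^{-1}) *)
      (forall r r' : dg0 R, (exists y : dg1 S, mor0 f r - mor0 f r' = dgd y) ->
         exists x : dg1 R, r - r' = dgd x) &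
      (forall s : dg0 S, exists (r : dg0 R) (y : dg1 S), s = mor0 f r + dgd y)].

Definition surjective_mor : Prop :=
  (forall s : dg0 S, exists r : dg0 R, mor0 f r = s) /\
  (forall y : dg1 S, exists x : dg1 R, mor1 f x = y).

End MorProps.

Record corr (R1 R2 : dgring) := Corr {
  capex : dgring;
  cleft : dgmor capex R1;
  cright : dgmor capex R2 }.

Definition corr_comp (R1 R2 R3 : dgring) (c : corr R1 R2) (c' : corr R2 R3)
  : corr R1 R3 :=
  @Corr R1 R3 (fiber_product (cright c) (cleft c'))
    (dgcomp (cleft c) fp_pr1) (dgcomp (cright c') fp_pr2).

Definition weakly_admissible (R1 R2 : dgring) (c : corr R1 R2) : Prop :=
  quasi_iso (cleft c) /\
  (forall (x1 : dg1 R1) (x2 : dg1 R2),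
     exists z : dg1 (capex c), mor1 (cleft c) z = x1 /\ mor1 (cright c) z = x2).

Definition anamorphism (R1 R2 : dgring) (c : corr R1 R2) : Prop :=
  surjective_mor (cleft c) /\ quasi_iso (cleft c).

From mathcomp Require Import all_boot all_algebra.

(* The projection [R12 x_{R2} R23 -> R12] is the base change of [R23 -> R2]
   along [R12 -> R2].  A base change of a quasi-isomorphism that is surjective
   in degree -1 is again a quasi-isomorphism (a diagram chase on kernels and
   cokernels of d), and base changes of surjections are surjections.  Since
   quasi-isomorphisms and surjections are closed under composition, the left
   leg of the composite correspondence inherits both properties.  For weakly
   admissible correspondences, surjectivity of [R23^-1 -> R2^-1] comes from
   that of [R23^-1 -> R2^-1 x R3^-1], and a pair [(x1, x3)] lifts to the
   fiber product by combining lifts of [(x1, 0)] and [(0, x3)], which agree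
   (both vanish) in [R2^-1]. *)

Set Implicit Arguments.
Unset Strict Implicit.
Unset Printing Implicit Defensive.
Import GRing.Theory.
Local Open Scope ring_scope.

Section DGRingTheory.
Variable R : dgring.

Lemma dgdD (x y : dg1 R) : dgd (x + y) = dgd x + dgd y.
Proof. by rewrite -[x]scale1r dgd_lin mul1r scale1r. Qed.

Lemma dgd0 : dgd (0 : dg1 R) = 0.
Proof. by apply: (addrI (dgd (0 : dg1 R))); rewrite -dgdD !addr0. Qed.

Lemma dgdN (x : dg1 R) : dgd (- x) = - dgd x.
Proof. by apply/eqP; rewrite -addr_eq0 -dgdD addNr dgd0. Qed.

Lemma dgdB (x y : dg1 R) : dgd (x - y) = dgd x - dgd y.
Proof. by rewrite dgdD dgdN. Qed.

End DGRingTheory.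

Section Composition.
Variables (R S T : dgring) (f : dgmor R S) (g : dgmor S T).

Lemma quasi_iso_comp : quasi_iso f -> quasi_iso g -> quasi_iso (dgcomp g f).
Proof.
case=> [f_inj f_surj f_coinj f_cosurj] [g_inj g_surj g_coinj g_cosurj].
split=> /=.
- move=> x x' dx dx' e; apply: f_inj => //; apply: g_inj => //.
  + by rewrite -mor_d dx mor0_0.
  + by rewrite -mor_d dx' mor0_0.
- move=> z dz; have [y [dy <-]] := g_surj _ dz; have [x [dx <-]] := f_surj _ dy.
  by exists x.
- by move=> r r' /g_coinj /f_coinj.
- move=> t; have [s [z ->]] := g_cosurj t; have [r [y ->]] := f_cosurj s.
  by exists r, (mor1 g y + z); rewrite mor0_add mor_d dgdD addrA.
Qed.

Lemma surjective_mor_comp :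
  surjective_mor f -> surjective_mor g -> surjective_mor (dgcomp g f).
Proof.
case=> [f_surj0 f_surj1] [g_surj0 g_surj1]; split=> /=.
- move=> t; have [s <-] := g_surj0 t; have [r <-] := f_surj0 s; by exists r.
- move=> z; have [y <-] := g_surj1 z; have [x <-] := f_surj1 y; by exists x.
Qed.

End Composition.

Section BaseChange.
Variables (A B C : dgring) (f : dgmor A C) (g : dgmor B C).

Definition fp0_pair (a : dg0 A) (b : dg0 B) (e : mor0 f a = mor0 g b) : fp0 f g :=
  FP0 (introT eqP e : (a, b) \in fp0_pred f g).

Definition fp1_pair (a : dg1 A) (b : dg1 B) (e : mor1 f a = mor1 g b) : fp1 f g :=
  FP1 (introT eqP e : (a, b) \in fp1_pred f g).

Lemma fp_pr1_surjective : surjective_mor g -> surjective_mor (@fp_pr1 _ _ _ f g).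
Proof.
case=> [g_surj0 g_surj1]; split=> /=.
- move=> a; have [b e] := g_surj0 (mor0 f a); by exists (fp0_pair (esym e)).
- move=> a; have [b e] := g_surj1 (mor1 f a); by exists (fp1_pair (esym e)).
Qed.

Lemma fp_pr1_quasi_iso : quasi_iso g -> (forall z : dg1 C, exists y, mor1 g y = z) ->
  quasi_iso (@fp_pr1 _ _ _ f g).
Proof.
case=> [g_inj g_surj g_coinj g_cosurj] g_surj1; split=> /=.
- case=> [[x1 x2] px] [[y1 y2] py] dx dy /= e1; subst y1.
  have /eqP /= ex := px; have /eqP /= ey := py.
  have dx2 : dgd x2 = 0 by move/(congr1 (fun p => (fp0v p).2)): dx.
  have dy2 : dgd y2 = 0 by move/(congr1 (fun p => (fp0v p).2)): dy.
  have e2 : x2 = y2 by apply: g_inj; rewrite // -ex -ey.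
  by apply: val_inj; rewrite /= e2.
- move=> a da.
  have dfa : dgd (mor1 f a) = 0 by rewrite -mor_d da mor0_0.
  have [b [db e]] := g_surj _ dfa.
  by exists (fp1_pair (esym e)); split; first by apply: val_inj; rewrite /= da db.
- case=> [[r1 r2] pr] [[s1 s2] ps] [a /= da].
  have /eqP /= er := pr; have /eqP /= es := ps.
  have [b db] : exists b, r2 - s2 = dgd b.
    by apply: g_coinj; exists (mor1 f a); rewrite -er -es -mor0_B da mor_d.
  (* Correcting [b] by a cycle lifting [mor1 g b - mor1 f a] puts [(a, b)]
     in the fiber product. *)
  have cyc : dgd (mor1 g b - mor1 f a) = 0.
    by rewrite dgdB -!mor_d -db -da !mor0_B er es subrr.
  have [b' [db' eb']] := g_surj _ cyc.
  have e : mor1 f a = mor1 g (b - b') by rewrite mor1_B eb' opprB addrC subrK.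
  by exists (fp1_pair e); apply: val_inj; rewrite /= dgdB db' subr0 -da -db.
- move=> a; have [b [z e]] := g_cosurj (mor0 f a); have [y ey] := g_surj1 z.
  have e' : mor0 f a = mor0 g (b + dgd y) by rewrite mor0_add mor_d ey.
  by exists (fp0_pair e'), 0; rewrite /= dgd0 addr0.
Qed.

End BaseChange.

Section CorrespondenceComposition.
Variables (R1 R2 R3 : dgring) (c : corr R1 R2) (c' : corr R2 R3).

Lemma weakly_admissible_comp :
  weakly_admissible c -> weakly_admissible c' -> weakly_admissible (corr_comp c c').
Proof.
case: c c' => [A f g] [B h k] [qf lift_c] [qh lift_c']; split=> /=.
- have h_surj1 : forall y, exists z, mor1 h z = y.
    by move=> y; have [z [hz _]] := lift_c' y 0; exists z.
  exact: quasi_iso_comp (fp_pr1_quasi_iso _ qh h_surj1) qf.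
- move=> x1 x3.
  have [a [fa ga]] := lift_c x1 0; have [b [hb kb]] := lift_c' 0 x3.
  have e : mor1 g a = mor1 h b by rewrite ga hb.
  by exists (fp1_pair e).
Qed.

Lemma anamorphism_comp :
  anamorphism c -> anamorphism c' -> anamorphism (corr_comp c c').
Proof.
case: c c' => [A f g] [B h k] [sf qf] [sh qh]; split=> /=.
- exact: surjective_mor_comp (fp_pr1_surjective _ sh) sf.
- exact: quasi_iso_comp (fp_pr1_quasi_iso _ qh sh.2) qf.
Qed.

End CorrespondenceComposition.

Theorem lemma4p2p5 (R1 R2 R3 : dgring) :
  (forall (c : corr R1 R2) (c' : corr R2 R3),
     weakly_admissible c -> weakly_admissible c' ->
     weakly_admissible (corr_comp c c')) /\
  (forall (c : corr R1 R2) (c' : corr R2 R3),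
     anamorphism c -> anamorphism c' -> anamorphism (corr_comp c c')).
Proof.
split=> c c'; [exact: weakly_admissible_comp | exact: anamorphism_comp].
Qed.
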